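(* Let $G$ be a connected graph of order $n\geq 2$. The following are pairwise equivalent: (i) $\mathrm{ldim}_f(G)=\frac{n}{2}$; (ii) every vertex of $G$ has a true twin, i.e. for every $u\in V(G)$ there is $v\neq u$ with $N[u]=N[v]$; (iii) there exist a graph $H$ and a family $\mathcal I=\{I_v\}_{v\in V(H)}$ of complete graphs each of order at least $2$ such that $G$ is isomorphic to the generalized lexicographic product $H[\mathcal I]$.
   Context: All graphs are finite, simple and connected; $d(x,y)$ is the shortest-path distance. For an edge $uv$, $L(uv)=\{x\in V(G): d(u,x)\neq d(v,x)\}$. A function $f:V(G)\to[0,1]$ is a local resolving function of $G$ if $\sum_{x\in L(uv)}f(x)\geq 1$ for every edge $uv$; $\mathrm{ldim}_f(G)$ is the minimum of $\sum_{v\in V(G)}f(v)$ over all local resolving functions. $N[u]$ is the closed neighborhood of $u$. Given a graph $H$ and graphs $I_v$ indexed by $v\in V(H)$, the generalized lexicographic product $H[\mathcal I]$ has vertex set $\{(v,w): v\in V(H), w\in V(I_v)\}$, with $(v_1,w_1)(v_2,w_2)$ an edge iff $v_1v_2\in E(H)$, or $v_1=v_2$ and $w_1w_2\in E(I_{v_1})$. *)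

From HB Require Import structures.
From mathcomp Require Import all_boot all_order all_algebra.
Set Implicit Arguments. Unset Strict Implicit. Unset Printing Implicit Defensive.
Import Order.TTheory GRing.Theory Num.Theory.

Definition simple_graph (T : finType) (e : rel T) : Prop :=
  symmetric e /\ irreflexive e.

Definition connected_graph (T : finType) (e : rel T) : Prop :=
  forall x y : T, connect e x y.

Fixpoint ball (T : finType) (e : rel T) (k : nat) (x : T) : {set T} :=
  match k with
  | 0 => [set x]
  | k'.+1 => ball e k' x :|: [set z | [exists y in ball e k' x, e y z]]
  end.

(* Shortest-path distance: least k with y within distance k of x
   (any two vertices of a connected graph are at distance < #|T|). *)
Definition dist (T : finType) (e : rel T) (x y : T) : nat :=
  find (fun k => y \in ball e k x) (iota 0 #|T|).

Definition Lset (T : finType) (e : rel T) (u v : T) : {set T} :=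
  [set x | dist e u x != dist e v x].

Local Open Scope ring_scope.

Definition local_resolving_fun (R : realFieldType) (T : finType) (e : rel T)
  (f : T -> R) : Prop :=
  (forall x, 0 <= f x <= 1) /\
  (forall u v, e u v -> 1 <= \sum_(x in Lset e u v) f x).

Definition ldimf_is (R : realFieldType) (T : finType) (e : rel T) (r : R) : Prop :=
  (exists f : T -> R, local_resolving_fun e f /\ \sum_(x : T) f x = r) /\
  (forall f : T -> R, local_resolving_fun e f -> r <= \sum_(x : T) f x).

Local Close Scope ring_scope.

Definition closed_nbhd (T : finType) (e : rel T) (u : T) : {set T} :=
  [set w | (w == u) || e u w].

Definition lexprod_rel (VH : finType) (eH : rel VH) (W : VH -> finType)
  (eI : forall v, rel (W v)) : rel {v : VH & W v} :=
  fun p q =>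
    eH (tag p) (tag q) ||
    ((tag p == tag q) && eI (tag q) (tagged_as q p) (tagged q)).

From HB Require Import structures.
From mathcomp Require Import all_boot all_order all_algebra.
From mathcomp Require Import lra.
Import Order.TTheory GRing.Theory Num.Theory.
Set Implicit Arguments. Unset Strict Implicit. Unset Printing Implicit Defensive.

(* True twins u, v are adjacent and every other vertex is at the same distance
   from both, so L(uv) = {u, v}: a local resolving function gives weight at
   least 1 to every pair of true twins.  Pairing the vertices of weight below
   1/2 injectively with twins of weight above 1/2 then gives ldim_f >= n/2,
   and the constant 1/2 always resolves.  If w has no true twin, each
   neighbour v of w is separated from w by a third vertex of L(wv), taken from
   the symmetric difference of N[w] and N[v]; hence weight 1/2 everywhere
   except 0 at w resolves, and ldim_f < n/2.  Finally, the classes of equal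
   closed neighbourhoods are cliques, and adjacency between two distinct
   classes is all or nothing, so G is the lexicographic product of its
   quotient by these classes with cliques; conversely, in such a product two
   vertices with the same first coordinate have the same closed
   neighbourhood. *)

Definition all_true_twins (T : finType) (e : rel T) : Prop :=
  forall u : T, exists v : T, v != u /\ closed_nbhd e u = closed_nbhd e v.

Definition lexprod_of_cliques (T : finType) (e : rel T) : Prop :=
  exists (VH : finType) (eH : rel VH) (W : VH -> finType)
         (eI : forall v, rel (W v)) (phi : T -> {v : VH & W v}),
    [/\ simple_graph eH, connected_graph eH,
        (forall v, 2 <= #|W v| /\ (forall a b : W v, eI v a b = (a != b))),
        bijective phi &
        (forall x y : T, e x y = lexprod_rel eH eI (phi x) (phi y))].

Section Sums.
Variables (R : realFieldType) (T : finType).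
Local Open Scope ring_scope.

Lemma ler_sum_subset (A B : {set T}) (F : T -> R) : A \subset B ->
  {in B :\: A, forall x, 0 <= F x} -> \sum_(x in A) F x <= \sum_(x in B) F x.
Proof.
move=> AB F_ge0; rewrite [X in _ <= X](big_setID A) /= (setIidPr AB) lerDl.
exact: sumr_ge0.
Qed.

Lemma ler_sum_pair (A : {set T}) (F : T -> R) a b : a != b ->
  a \in A -> b \in A -> {in A, forall x, 0 <= F x} ->
  F a + F b <= \sum_(x in A) F x.
Proof.
move=> ab aA bA F_ge0.
have ->: F a + F b = \sum_(x in [set a; b]) F x.
  by rewrite big_setU1 ?inE // big_set1.
apply: ler_sum_subset => [|x /setDP[/F_ge0 //]].
by apply/subsetP => x; rewrite !inE => /orP[]/eqP->.
Qed.

Lemma sum_const_half : \sum_(x : T) (2^-1 : R) = #|T|%:R / 2.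
Proof. by rewrite sumr_const -[_ *+ _]mulr_natl. Qed.

(* Values below 1/2 are paired injectively with values above 1/2 by a
   partner map [t], so the total excess over 1/2 is nonnegative. *)
Lemma half_card_le_sum (K : eqType) (k : T -> K) (f : T -> R) :
    (forall x, exists y, y != x /\ k x = k y) ->
    (forall x y, x != y -> k x = k y -> 1 <= f x + f y) ->
  #|T|%:R / 2 <= \sum_x f x.
Proof.
move=> partner pair_ge1.
have /fin_all_exists2[t t_neq t_key] : forall x, exists2 y, y != x & k x = k y.
  by move=> x; have [y []] := partner x; exists y.
pose g x := f x - 2^-1; pose N := [set x | f x < 2^-1].
have sum_fE : \sum_x f x = \sum_x g x + #|T|%:R / 2.
  by rewrite sumrB sum_const_half subrK.
have tN x : x \in N -> t x \notin N.
  rewrite !inE -leNgt => fx; have := pair_ge1 _ _ (t_neq x) (esym (t_key x)).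
  lra.
have t_inj : {in N &, injective t}.
  move=> x y; rewrite !inE => fx fy txy; apply/eqP/negPn/negP => xy.
  have kxy : k x = k y by rewrite t_key txy -t_key.
  have := pair_ge1 _ _ xy kxy; lra.
have sumNC : \sum_(x in N) g (t x) <= \sum_(x in ~: N) g x.
  rewrite -(big_imset _ t_inj); apply: ler_sum_subset.
    by apply/subsetP => _ /imsetP[x xN ->]; rewrite inE tN.
  by move=> x /setDP[]; rewrite !inE /g -leNgt subr_ge0.
rewrite sum_fE lerDr (bigID (mem N)) /=.
rewrite [X in _ + X](eq_bigl (mem (~: N))) => [|x]; last by rewrite !inE.
apply: le_trans (lerD (lexx _) sumNC); rewrite -big_split /=.
apply: sumr_ge0 => x _; have := pair_ge1 _ _ (t_neq x) (esym (t_key x)).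
rewrite /g; lra.
Qed.

End Sums.

Lemma connect_image (T U : finType) (e : rel T) (e' : rel U) (h : T -> U) :
    (forall x y, e x y -> (h x == h y) || e' (h x) (h y)) ->
  forall x y, connect e x y -> connect e' (h x) (h y).
Proof.
move=> eh x y /connectP[p xp ->] {y}; elim: p x xp => //= y p IH x.
case/andP=> /eh exy /IH; apply: connect_trans.
by case/orP: exy => [/eqP->|/connect1].
Qed.

Section Fibres.
Variables (T K : finType) (k : T -> K).

Definition fibre_index : finType := {y : K | y \in codom k}.

Definition fibre (i : fibre_index) : finType := {x : T | k x == val i}.

Definition fibre_tag (x : T) : {i : fibre_index & fibre i} :=
  Tagged fibre (exist _ x (eqxx (k x)) : fibre (exist _ (k x) (codom_f k x))).

Lemma fibre_tag_bij : bijective fibre_tag.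
Proof.
exists (fun p : {i : fibre_index & fibre i} => val (tagged p)) => //.
move=> [[y ky] [x kxy]]; have /eqP/= kxy_eq := kxy; subst y.
rewrite /fibre_tag (bool_irrelevance ky (codom_f k x)).
by rewrite (bool_irrelevance kxy (eqxx _)).
Qed.

Lemma fibre_tag_eq x y : (tag (fibre_tag x) == tag (fibre_tag y)) = (k x == k y).
Proof. by []. Qed.

Lemma fibre_tag_onto i : exists x, tag (fibre_tag x) = i.
Proof.
case: i => y ky; have /codomP[x kx] := ky.
by exists x; apply: val_inj; rewrite /= kx.
Qed.

Lemma card_fibre_gt1 : (forall x, exists y, y != x /\ k x = k y) ->
  forall i, 1 < #|fibre i|.
Proof.
move=> partner i; have [x <-] := fibre_tag_onto i; have [y [yx kxy]] := partner x.
have ky : k y == val (tag (fibre_tag x)) by apply/eqP; rewrite /= kxy.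
apply/card_gt1P; exists (tagged (fibre_tag x)), (exist _ y ky); split=> //.
by rewrite -(inj_eq val_inj) /= eq_sym.
Qed.

Variable e : rel T.

Definition quotient_rel : rel fibre_index := fun i j =>
  (i != j) && [exists a : fibre i, exists b : fibre j, e (val a) (val b)].

Lemma quotient_simple : symmetric e -> simple_graph quotient_rel.
Proof.
move=> e_sym; split=> [i j|i]; last by rewrite /quotient_rel eqxx.
rewrite /quotient_rel eq_sym; congr andb.
by apply/existsP/existsP => -[a /existsP[b eab]]; exists b;
  apply/existsP; exists a; rewrite e_sym.
Qed.

Lemma quotient_connected : connected_graph e -> connected_graph quotient_rel.
Proof.
move=> e_conn i j.
have [x <-] := fibre_tag_onto i; have [y <-] := fibre_tag_onto j.
apply: (connect_image (h := fun x => tag (fibre_tag x))) (e_conn x y).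
move=> {}x {}y exy.
rewrite /quotient_rel; case: eqP => //= _.
apply/existsP; exists (tagged (fibre_tag x)).
by apply/existsP; exists (tagged (fibre_tag y)).
Qed.

Hypothesis e_fibre_congr : forall x x' y y',
  k x = k x' -> k y = k y' -> k x != k y -> e x y = e x' y'.

Lemma quotient_relE x y : k x != k y ->
  quotient_rel (tag (fibre_tag x)) (tag (fibre_tag y)) = e x y.
Proof.
move=> kxy; rewrite /quotient_rel fibre_tag_eq kxy /=.
apply/existsP/idP => [[[x' /eqP kx'] /existsP[[y' /eqP ky'] /= ex'y']]|exy].
  by rewrite (e_fibre_congr (esym kx') (esym ky')).
by exists (tagged (fibre_tag x)); apply/existsP; exists (tagged (fibre_tag y)).
Qed.

End Fibres.

Lemma lexprod_rel_cliques (VH : finType) (eH : rel VH) (W : VH -> finType)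
    (eI : forall v, rel (W v)) : (forall v (a b : W v), eI v a b = (a != b)) ->
  forall p q,
  lexprod_rel eH eI p q = eH (tag p) (tag q) || (tag p == tag q) && (p != q).
Proof.
move=> eIE p q; rewrite /lexprod_rel eIE; case: eqP => //= pq.
by rewrite -[p == q]eq_sym -tag_eqE /tag_eq pq eqxx /= eq_sym.
Qed.

Section LexprodNbhd.
Variables (T U : finType) (e : rel T) (h : T -> U) (a : rel U).
Hypothesis eE : forall x y, e x y = a (h x) (h y) || (h x == h y) && (x != y).

Lemma closed_nbhd_fibre u v : h u = h v -> closed_nbhd e u = closed_nbhd e v.
Proof.
suff nbhdE w : closed_nbhd e w = [set z | a (h w) (h z) || (h w == h z)].
  by move=> huv; rewrite !nbhdE huv.
apply/setP => z; rewrite !inE eE; case: (eqVneq z w) => [->|zw].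
  by rewrite !eqxx orbT.
by rewrite andbT.
Qed.

End LexprodNbhd.

Section TrueTwins.
Variables (T : finType) (e : rel T).
Hypotheses (e_sym : symmetric e) (e_irr : irreflexive e).

Lemma edge_neq u v : e u v -> u != v.
Proof. by apply: contraTneq => ->; rewrite e_irr. Qed.

Lemma ball1 u : ball e 1 u = closed_nbhd e u.
Proof.
apply/setP => z; rewrite !inE; congr (_ || _).
apply/existsP/idP => [[y /andP[]]|euz]; first by rewrite inE => /eqP->.
by exists u; rewrite inE eqxx.
Qed.

Lemma ball_true_twins u v k : closed_nbhd e u = closed_nbhd e v ->
  0 < k -> ball e k u = ball e k v.
Proof.
move=> Nuv; elim: k => // -[|k] IH _; first by rewrite !ball1.
by rewrite /= -!/(ball e k.+1 _) IH.
Qed.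

Lemma distxx x : dist e x x = 0.
Proof. by rewrite /dist; case: #|T| => //= n; rewrite inE eqxx. Qed.

Lemma dist_true_twins u v x : closed_nbhd e u = closed_nbhd e v ->
  x != u -> x != v -> dist e u x = dist e v x.
Proof.
move=> Nuv xu xv; rewrite /dist; apply: eq_find => -[|k].
  by rewrite /= !inE (negbTE xu) (negbTE xv).
by rewrite (ball_true_twins Nuv).
Qed.

Lemma true_twins_adj u v : v != u -> closed_nbhd e u = closed_nbhd e v -> e u v.
Proof.
move=> vu Nuv; have: v \in closed_nbhd e u by rewrite Nuv inE eqxx.
by rewrite inE (negbTE vu).
Qed.

Lemma edge_true_twins_congr x x' y y' :
    closed_nbhd e x = closed_nbhd e x' -> closed_nbhd e y = closed_nbhd e y' ->
  closed_nbhd e x != closed_nbhd e y -> e x y = e x' y'.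
Proof.
suff imp a a' b b' : closed_nbhd e a = closed_nbhd e a' ->
    closed_nbhd e b = closed_nbhd e b' -> closed_nbhd e a != closed_nbhd e b ->
  e a b -> e a' b'.
  move=> Nx Ny Nxy; apply/idP/idP; first exact: imp.
  by apply: imp; rewrite -?Nx -?Ny.
move=> Na Nb Nab eab; have: b \in closed_nbhd e a' by rewrite -Na inE eab orbT.
rewrite inE => /orP[/eqP ba'|ea'b]; first by rewrite Na -ba' eqxx in Nab.
have: a' \in closed_nbhd e b' by rewrite -Nb inE e_sym ea'b orbT.
rewrite inE e_sym => /orP[/eqP a'b'|] //.
by rewrite Na a'b' -Nb eqxx in Nab.
Qed.

Lemma Lset_sym u v : Lset e u v = Lset e v u.
Proof. by apply/setP => x; rewrite !inE eq_sym. Qed.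

(* [dist] only searches the distances below [#|T|]. *)
Hypothesis card_gt1 : 1 < #|T|.

Lemma dist_eq1 x y : (dist e x y == 1) = e x y.
Proof.
rewrite /dist; case: #|T| card_gt1 => [|[|n]] // _ /=.
rewrite inE -/(ball e 1 x) ball1 inE.
by case: (eqVneq y x) => [->|_] /=; [rewrite e_irr | case: (e x y)].
Qed.

Lemma mem_Lset_l u v : e u v -> u \in Lset e u v.
Proof.
move=> euv; have: dist e v u == 1 by rewrite dist_eq1 e_sym.
by rewrite inE distxx => /eqP->.
Qed.

Lemma mem_Lset_r u v : e u v -> v \in Lset e u v.
Proof. by move=> euv; rewrite Lset_sym mem_Lset_l // e_sym. Qed.

Lemma mem_Lset_nbhd u v x : e u v ->
  x \in closed_nbhd e u -> x \notin closed_nbhd e v -> x \in Lset e u v.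
Proof.
move=> euv xu xv; have xnu : x != u.
  by apply: contraNneq xv => ->; rewrite inE e_sym euv orbT.
move: xu; rewrite inE (negbTE xnu) /= -dist_eq1 => /eqP dux.
rewrite inE dux eq_sym dist_eq1; apply: contra xv => evx.
by rewrite inE evx orbT.
Qed.

Lemma Lset_true_twins u v : closed_nbhd e u = closed_nbhd e v ->
  Lset e u v \subset [set u; v].
Proof.
move=> Nuv; apply/subsetP => x; rewrite !inE; apply: contraR.
by rewrite negb_or => /andP[xu xv]; rewrite (dist_true_twins Nuv).
Qed.

Lemma Lset_not_true_twins u v : e u v -> closed_nbhd e u != closed_nbhd e v ->
  exists2 x, x \in Lset e u v & x \notin [set u; v].
Proof.
move=> euv Nuv.
have [x xuv] : exists x, (x \in closed_nbhd e u) != (x \in closed_nbhd e v).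
  apply/existsP; apply: contraNT Nuv => /existsPn Nuv.
  by apply/eqP/setP => x; apply/eqP/negPn/Nuv.
have uvN w : w \in [set u; v] ->
    (w \in closed_nbhd e u) && (w \in closed_nbhd e v).
  by rewrite !inE => /orP[]/eqP->; rewrite !eqxx /= ?[e v u]e_sym euv orbT.
exists x; last by apply: contra xuv => /uvN/andP[-> ->].
case: (boolP (x \in closed_nbhd e u)) xuv => xu /=; rewrite ?negbK => xv.
  exact: mem_Lset_nbhd.
by rewrite Lset_sym; apply: mem_Lset_nbhd; rewrite // e_sym.
Qed.

Lemma lexprod_of_true_twins :
  connected_graph e -> all_true_twins e -> lexprod_of_cliques e.
Proof.
move=> e_conn twins; pose k := closed_nbhd e.
exists (fibre_index k), (@quotient_rel _ _ k e), (@fibre _ _ k),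
  (fun i (a b : @fibre _ _ k i) => a != b), (fibre_tag k).
split.
- exact: quotient_simple.
- exact: quotient_connected.
- by move=> i; split=> //; exact: card_fibre_gt1.
- exact: fibre_tag_bij.
move=> x y; rewrite lexprod_rel_cliques // (bij_eq (fibre_tag_bij k)) fibre_tag_eq.
have [Nxy|Nxy] := eqVneq (k x) (k y); last first.
  by rewrite (quotient_relE edge_true_twins_congr Nxy) orbF.
have ->: tag (fibre_tag k y) = tag (fibre_tag k x).
  by apply/eqP; rewrite fibre_tag_eq Nxy.
rewrite /quotient_rel eqxx /=.
by have [->|xy] := eqVneq x y; [rewrite e_irr | rewrite true_twins_adj // eq_sym].
Qed.

Lemma true_twins_of_lexprod : lexprod_of_cliques e -> all_true_twins e.
Proof.
case=> VH [eH [W [eI [phi [_ _ W_cliques [psi phiK psiK] e_lex]]]]] u.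
have eE x y : e x y =
    eH (tag (phi x)) (tag (phi y)) || (tag (phi x) == tag (phi y)) && (x != y).
  by rewrite e_lex lexprod_rel_cliques ?(can_eq phiK) // => i; case: (W_cliques i).
have /set0Pn[s] : [set~ tagged (phi u)] != set0.
  by rewrite -card_gt0 cardsC1 -subn1 subn_gt0 (W_cliques _).1.
rewrite !inE => s_neq; exists (psi (Tagged W s)); split.
  apply: contraNneq s_neq => psi_u.
  by rewrite eq_sym -eq_Tagged -{1}psi_u psiK.
by apply: (closed_nbhd_fibre eE); rewrite psiK.
Qed.

Lemma true_twins_iff_lexprod :
  connected_graph e -> (all_true_twins e <-> lexprod_of_cliques e).
Proof.
move=> e_conn.
by split; [exact: lexprod_of_true_twins | exact: true_twins_of_lexprod].
Qed.

Variable R : realFieldType.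
Local Open Scope ring_scope.

Lemma const_half_resolving : local_resolving_fun e (fun _ : T => 2^-1 : R).
Proof.
split=> [x|u v euv]; first by apply/andP; split; lra.
have half_ge0 : {in Lset e u v, forall x, (0 : R) <= 2^-1} by move=> x _; lra.
have := ler_sum_pair (F := fun=> 2^-1) (edge_neq euv) (mem_Lset_l euv)
  (mem_Lset_r euv) half_ge0.
lra.
Qed.

Lemma true_twins_weight (f : T -> R) x y : local_resolving_fun e f -> x != y ->
  closed_nbhd e x = closed_nbhd e y -> 1 <= f x + f y.
Proof.
move=> [f01 f_res] xy Nxy; have exy : e x y by rewrite true_twins_adj // eq_sym.
apply: le_trans (f_res _ _ exy) _.
have ->: f x + f y = \sum_(z in [set x; y]) f z.
  by rewrite big_setU1 ?inE // big_set1.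
by apply: ler_sum_subset (Lset_true_twins Nxy) _ => z _; case/andP: (f01 z).
Qed.

Lemma ldimf_half_of_true_twins : all_true_twins e -> @ldimf_is R T e (#|T|%:R / 2).
Proof.
move=> twins; split.
  exists (fun=> 2^-1).
  by split; [exact: const_half_resolving | exact: sum_const_half].
move=> f f_res; apply: (half_card_le_sum (k := closed_nbhd e)) => // x y xy.
exact: true_twins_weight.
Qed.

Definition half_except (w x : T) : R := if x == w then 0 else 2^-1.

Lemma sum_half_except w : \sum_x half_except w x = #|T|%:R / 2 - 2^-1.
Proof.
rewrite -sum_const_half (bigD1 w) //= [in RHS](bigD1 w) //= {1}/half_except eqxx.
rewrite (eq_bigr (fun=> 2^-1)) => [|x /negbTE xw]; last by rewrite /half_except xw.
lra.
Qed.

Lemma half_except_resolving w :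
    (forall v, v != w -> closed_nbhd e w != closed_nbhd e v) ->
  local_resolving_fun e (half_except w).
Proof.
move=> no_twin.
have half_ge0 x : 0 <= half_except w x.
  by rewrite /half_except; case: ifP => _; lra.
have pair_ge1 (A : {set T}) a b : a != b -> a \in A -> b \in A ->
    a != w -> b != w -> 1 <= \sum_(x in A) half_except w x.
  move=> ab aA bA aw bw.
  apply: le_trans (ler_sum_pair ab aA bA (fun x _ => half_ge0 x)).
  rewrite /half_except (negbTE aw) (negbTE bw); lra.
have at_w v : e w v -> 1 <= \sum_(x in Lset e w v) half_except w x.
  move=> ewv; have vw : v != w by rewrite eq_sym edge_neq.
  have [x xL] := Lset_not_true_twins ewv (no_twin _ vw).
  rewrite !inE negb_or => /andP[xw xv].
  by apply: (pair_ge1 _ _ _ _ (mem_Lset_r ewv) xL vw xw); rewrite eq_sym.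
split=> [x|u v].
  by rewrite /half_except; case: ifP => _; apply/andP; split; lra.
have [->|uw] := eqVneq u w; first exact: at_w.
have [->|vw] := eqVneq v w; first by rewrite Lset_sym e_sym; exact: at_w.
move=> euv.
exact: pair_ge1 _ _ _ (edge_neq euv) (mem_Lset_l euv) (mem_Lset_r euv) uw vw.
Qed.

Lemma true_twins_of_ldimf_half : @ldimf_is R T e (#|T|%:R / 2) -> all_true_twins e.
Proof.
move=> [_ ldimf_min] u.
case: (pickP (fun v => (v != u) && (closed_nbhd e u == closed_nbhd e v))).
  by move=> v /andP[vu /eqP Nuv]; exists v.
move=> no_pick; have twinless v : v != u -> closed_nbhd e u != closed_nbhd e v.
  by move=> vu; have := no_pick v; rewrite vu => /negbT.
have := ldimf_min _ (half_except_resolving twinless); rewrite sum_half_except.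
lra.
Qed.

Lemma ldimf_half_iff_true_twins :
  @ldimf_is R T e (#|T|%:R / 2) <-> all_true_twins e.
Proof.
split; [exact: true_twins_of_ldimf_half | exact: ldimf_half_of_true_twins].
Qed.

End TrueTwins.

Theorem theorem2p3 (R : realFieldType) (T : finType) (e : rel T) :
  simple_graph e -> connected_graph e -> 2 <= #|T| ->
  (@ldimf_is R T e (#|T|%:R / 2)%R <->
     (forall u : T, exists v : T, v != u /\ closed_nbhd e u = closed_nbhd e v))
  /\
  ((forall u : T, exists v : T, v != u /\ closed_nbhd e u = closed_nbhd e v) <->
     exists (VH : finType) (eH : rel VH) (W : VH -> finType)
            (eI : forall v, rel (W v)) (phi : T -> {v : VH & W v}),
       [/\ simple_graph eH, connected_graph eH,
           (forall v, 2 <= #|W v| /\ (forall a b : W v, eI v a b = (a != b))),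
           bijective phi &
           (forall x y : T, e x y = lexprod_rel eH eI (phi x) (phi y))]).
Proof.
move=> [e_sym e_irr] e_conn card_gt1; split.
  exact: ldimf_half_iff_true_twins.
exact: true_twins_iff_lexprod.
Qed.
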